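(* For every $k \in \mathbb{N}$ we have $\mathrm{N}(k) = k + \lfloor \log_2(k + 1 + \lfloor \log_2(k+1) \rfloor) \rfloor$.
   Context: The function $\mathrm{N} : \mathbb{N} \to \mathbb{N}$, $\mathbb{N} = \{1,2,\dots\}$, is defined recursively by $\mathrm{N}(1) = 2$ and, for $k \ge 2$, $\mathrm{N}(k) = \max_{i \in \{2,\dots,k\}} \min(2i, \mathrm{N}(k-i+1) + i)$. *)

From mathcomp Require Import all_boot.
Set Implicit Arguments. Unset Strict Implicit. Unset Printing Implicit Defensive.

(* N : {1,2,...} -> {1,2,...}, N(1) = 2 and for k >= 2
   N(k) = max_{i in {2..k}} min(2i, N(k-i+1) + i).
   In the table s = [:: N 1; ...; N k], N j = nth 0 s j.-1. *)

Definition Nnext (s : seq nat) : nat :=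
  let k := size s in
  if k is 0 then 2
  else \max_(2 <= i < k.+2) minn (2 * i) (nth 0 s (k.+1 - i) + i).
  (* here the new index is k+1, so N(k+1-i+1) = nth 0 s (k+1-i) *)

Fixpoint Ntable (k : nat) : seq nat :=
  if k is k'.+1 then rcons (Ntable k') (Nnext (Ntable k')) else [::].

(* N k for k >= 1 (N 0 is a junk value, irrelevant since the domain is {1,2,...}) *)
Definition N (k : nat) : nat := nth 0 (Ntable k) k.-1.

Definition log2floor (m : nat) : nat := trunc_log 2 m.

From mathcomp Require Import all_boot zify.

(* Let [e k = Nexcess k], so the claim is [N k = k + e k].  The key fact is
   that [e k] is the largest [m] with [2 ^ m <= k + m].  By strong induction,
   the [i]-th term of the recursion for [N n] is [min(2 i, n + 1 + e j)] with
   [j = n + 1 - i].  If [e j < e n] the second argument is at most [n + e n];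
   otherwise [2 ^ (e n) <= j + e n] forces [2 i <= n + e n].  Conversely the
   choice [j = 2 ^ g - g] with [g = e n - 1] attains [n + e n]. *)

Definition Nexcess (k : nat) : nat := log2floor (k + 1 + log2floor (k + 1)).

Lemma exp2_le_log2_shift (k m : nat) : 1 <= k ->
  (2 ^ m <= k + 1 + trunc_log 2 (k + 1)) = (2 ^ m <= k + m).
Proof.
move=> k1.
have /andP[lo hi] := @trunc_log_bounds 2 (k + 1) isT (ltn_addl k (isT : 0 < 1)).
set t := trunc_log 2 (k + 1) in lo hi *; rewrite expnS in hi.
have t_lt : t < 2 ^ t := ltn_expl t (isT : 1 < 2).
have [m_le|t_lt_m] := leqP m t.
  have : 2 ^ m <= 2 ^ t by rewrite leq_exp2l.
  by case: m m_le => [|m] _ le_m; rewrite ?expn0; apply/idP/idP => _; lia.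
have [->|m_neq] := eqVneq m t.+1; first by apply/idP/idP; lia.
have [d ->] : exists d, m = t.+2 + d by exists (m - t.+2); lia.
have d_lt : d < 2 ^ d := ltn_expl d (isT : 1 < 2).
by rewrite expnD !expnS; apply/idP/idP; nia.
Qed.

Lemma leq_Nexcess (k m : nat) : 1 <= k -> (m <= Nexcess k) = (2 ^ m <= k + m).
Proof.
move=> k1; rewrite -exp2_le_log2_shift // /Nexcess /log2floor.
apply/idP/idP => [le_m|]; last exact: trunc_log_max.
apply: leq_trans (trunc_logP (isT : 1 < 2) _); last by lia.
by rewrite leq_exp2l.
Qed.

Lemma size_Ntable (k : nat) : size (Ntable k) = k.
Proof. by elim: k => //= k IH; rewrite size_rcons IH. Qed.

Lemma nth_Ntable (k j : nat) : j < k -> nth 0 (Ntable k) j = N j.+1.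
Proof.
elim: k => // k IH lt_jk /=; rewrite nth_rcons size_Ntable.
case: ltnP => [|le_kj]; first exact: IH.
have -> : j = k by lia.
by rewrite eqxx /N /= nth_rcons size_Ntable ltnn eqxx.
Qed.

Lemma N_rec (n : nat) : 2 <= n ->
  N n = \max_(2 <= i < n.+1) minn (2 * i) (N (n.+1 - i) + i).
Proof.
case: n => [|m] // m_ge1.
rewrite /N /= nth_rcons size_Ntable ltnn eqxx /Nnext size_Ntable.
case: m m_ge1 => [|k] // _.
apply: eq_big_nat => i /andP[le2i lt_ik].
rewrite nth_Ntable; last by lia.
by have -> : (k.+2 - i).+1 = k.+3 - i by lia.
Qed.

Section RecursionStep.

Variable n : nat.
Hypothesis n_ge2 : 2 <= n.
Hypothesis N_lt : forall j, 1 <= j < n -> N j = j + Nexcess j.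

Let e := Nexcess n.

Lemma exp2_excess_le : 2 ^ e <= n + e.
Proof. by rewrite -leq_Nexcess //; lia. Qed.

Lemma exp2_excess_gt : n + e.+1 < 2 ^ e.+1.
Proof. by rewrite ltnNge -leq_Nexcess ?ltnn //; lia. Qed.

Lemma N_rec_term_le (i : nat) : 2 <= i <= n ->
  minn (2 * i) (N (n.+1 - i) + i) <= n + e.
Proof.
move=> /andP[le2i le_in].
have hi := exp2_excess_gt; rewrite expnS in hi.
rewrite N_lt; last by lia.
have [lt_je|le_ej] := ltnP (Nexcess (n.+1 - i)) e.
  by rewrite geq_min; apply/orP; right; lia.
have : 2 ^ e <= n.+1 - i + e by rewrite -leq_Nexcess //; lia.
by move=> hj; rewrite geq_min; apply/orP; left; lia.
Qed.

Lemma N_rec_term_attains :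
  exists2 i, 2 <= i <= n & n + e <= minn (2 * i) (N (n.+1 - i) + i).
Proof.
have e_ge1 : 1 <= e by rewrite /e leq_Nexcess ?expn1; lia.
have lo := exp2_excess_le; have hi := exp2_excess_gt.
case: e e_ge1 lo hi => [//|g] _; rewrite !expnS => lo hi.
have g_lt : g < 2 ^ g := ltn_expl g (isT : 1 < 2).
set j := 2 ^ g - g.
exists (n.+1 - j); first by lia.
have -> : n.+1 - (n.+1 - j) = j by lia.
have le_gj : g <= Nexcess j by rewrite leq_Nexcess; lia.
by rewrite N_lt; [rewrite leq_min; apply/andP; split; lia | lia].
Qed.

Lemma N_step : N n = n + e.
Proof.
rewrite N_rec //; apply/eqP; rewrite eqn_leq; apply/andP; split.
  apply/bigmax_leqP_seq => i; rewrite mem_index_iota => i_in _.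
  by apply: N_rec_term_le; lia.
have [i i_in le_term] := N_rec_term_attains.
by apply: (bigmaxn_sup_seq i) => //; rewrite mem_index_iota; lia.
Qed.

End RecursionStep.

Theorem theorem7p21 (k : nat) : 1 <= k ->
  N k = k + log2floor (k + 1 + log2floor (k + 1)).
Proof.
elim/ltn_ind: k => -[|[|n]] IH // _.
by apply: (@N_step n.+2) => // j /andP[j_gt0 lt_jn]; apply: IH.
Qed.
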